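(* Let $M\ge 2$, $D,Q,K$ positive integers, and let $\varphi:\mathbb{R}^D\times R\to\mathbb{R}^K$ be a function on a parameter set $R$ such that for every $\bm{x}\in\mathbb{R}^D$ there exists $\rho\in R$ with $\varphi(\bm{x};\rho)\neq\bm{0}$. Consider networks $\mathcal{F}=\{F_i\}_{i=1}^M$ with $F_i(\bm{x})=\bm{W}^i\varphi(\bm{x};\rho^i)$, $\bm{W}^i\in\mathbb{R}^{Q\times K}$, $\rho^i\in R$, and a nonempty finite data set $\mathcal{D}=\{(\bm{x}_n,\bm{y}_n)\}_{n=1}^N\subset\mathbb{R}^D\times\mathbb{R}^Q$. Let $$E_\lambda(\mathcal{F},\mathcal{D}) = \frac{1}{N}\sum_{n=1}^N\Big(\frac{1}{M}\sum_{i=1}^M\|F_i(\bm{x}_n)-\bm{y}_n\|^2-\lambda\frac{1}{M}\sum_{i=1}^M\|F_i(\bm{x}_n)-\overline{F}(\bm{x}_n)\|^2\Big),\quad \overline{F}=\tfrac1M\textstyle\sum_i F_i.$$ Fix $i\in\{1,\dots,M\}$ and fix $F_j$ for all $j\neq i$. With infima over all parametrisations $(\bm{W}^i,\rho^i)$ of $F_i$ only: (i) if $\lambda<\frac{M}{M-1}$ then $\inf E_\lambda(\mathcal{F},\mathcal{D})>-\infty$; (ii) if $\lambda>\frac{M}{M-1}$ then $\inf E_\lambda(\mathcal{F},\mathcal{D})=-\infty$.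
   Context: $\|\cdot\|$ is the Euclidean norm. *)

From HB Require Import structures.
From mathcomp Require Import all_boot all_order all_algebra.
From mathcomp Require Import reals.
Set Implicit Arguments. Unset Strict Implicit. Unset Printing Implicit Defensive.
Import Order.TTheory GRing.Theory Num.Theory.
Local Open Scope ring_scope.

Definition sqnorm (R : realType) (n : nat) (v : 'cV[R]_n) : R :=
  \sum_(k < n) (v k ord0) ^+ 2.

Definition network (R : realType) (Rho : Type) (D Q K M : nat)
  (phi : 'cV[R]_D -> Rho -> 'cV[R]_K)
  (Ws : 'I_M -> 'M[R]_(Q, K)) (rhos : 'I_M -> Rho) (j : 'I_M) (x : 'cV[R]_D)
  : 'cV[R]_Q := Ws j *m phi x (rhos j).

Definition upd (I : eqType) (T : Type) (f : I -> T) (i : I) (a : T) : I -> T :=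
  fun j => if j == i then a else f j.

Definition Fbar (R : realType) (D Q M : nat) (F : 'I_M -> 'cV[R]_D -> 'cV[R]_Q)
  (x : 'cV[R]_D) : 'cV[R]_Q := (M%:R)^-1 *: \sum_(i < M) F i x.

Definition energy (R : realType) (D Q M N : nat) (lam : R)
  (F : 'I_M -> 'cV[R]_D -> 'cV[R]_Q)
  (xs : 'I_N -> 'cV[R]_D) (ys : 'I_N -> 'cV[R]_Q) : R :=
  (N%:R)^-1 * \sum_(n < N)
    ((M%:R)^-1 * \sum_(i < M) sqnorm (F i (xs n) - ys n)
     - lam * ((M%:R)^-1 * \sum_(i < M) sqnorm (F i (xs n) - Fbar F (xs n)))).

From HB Require Import structures.
From mathcomp Require Import all_boot all_order all_algebra.
From mathcomp Require Import reals.
From mathcomp Require Import ring lra.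
Set Implicit Arguments. Unset Strict Implicit. Unset Printing Implicit Defensive.
Import Order.TTheory GRing.Theory Num.Theory.
Local Open Scope ring_scope.

(* The energy splits into one term per data point and output coordinate,
   and with all other networks fixed each term is a quadratic polynomial in the
   corresponding output [v] of [F_i], with leading coefficient
   [(M - lam (M - 1)) / M^2] (the bias-variance expansion of the spread term).
   If [lam < M/(M-1)] every term is bounded below by the vertex of its parabola.
   If [lam > M/(M-1)], choose [rho] with [p := phi(x_1; rho) <> 0] and [W = t P]
   with every row of [P] equal to [p^T]: the energy becomes a quadratic in [t]
   whose leading coefficient is negative, since the term of [x_1] contributes
   [|p|^4 > 0] to it. *)

Section Quadratics.
Variable R : realFieldType.

Lemma quadratic_ge_vertex (c b d v : R) :
  0 < c -> d - b ^+ 2 / (4 * c) <= c * v ^+ 2 + b * v + d.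
Proof.
move=> c_gt0; have c_neq0 : c != 0 by rewrite gt_eqF.
have -> : c * v ^+ 2 + b * v + d = c * (v + b / (2 * c)) ^+ 2 + (d - b ^+ 2 / (4 * c)).
  by field; rewrite ?mulf_neq0 ?pnatr_eq0.
by rewrite lerDr mulr_ge0 ?sqr_ge0 ?ltW.
Qed.

Lemma quadratic_unbounded_below (c b d B : R) :
  c < 0 -> exists t, c * t ^+ 2 + b * t + d < B.
Proof.
move=> c_lt0; set K := `|b| + `|d - B| + 1.
have b_le := ler_norm b; have dB_le := ler_norm (d - B).
have K_ge1 : 1 <= K by rewrite /K; have := normr_ge0 b; have := normr_ge0 (d - B); lra.
exists (1 + K / - c); set t := 1 + K / - c.
have t_ge1 : 1 <= t by rewrite /t lerDl divr_ge0 ?oppr_ge0 ?ltW //; lra.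
have ct_le : c * t <= - K.
  have -> : c * t = c - K by rewrite /t; field; rewrite lt_eqF.
  lra.
have ctb_le : c * t + b <= - `|d - B| - 1 by move: ct_le; rewrite /K; lra.
have : t * (c * t + b) <= - `|d - B| - 1.
  have dB_ge0 := normr_ge0 (d - B).
  move: (c * t + b) ctb_le => X X_le; nra.
rewrite expr2; lra.
Qed.

Lemma sum_quadratic (I : finType) (c b d : I -> R) (t : R) :
  \sum_x (c x * t ^+ 2 + b x * t + d x)
  = (\sum_x c x) * t ^+ 2 + (\sum_x b x) * t + \sum_x d x.
Proof. by rewrite !big_split /= !mulr_suml. Qed.

End Quadratics.

Lemma sqnorm_gt0 (R : realType) (n : nat) (v : 'cV[R]_n) : v != 0 -> 0 < sqnorm v.
Proof.
move=> v_neq0; rewrite lt0r sumr_ge0 ?andbT => [|k _]; last exact: sqr_ge0.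
apply: contra v_neq0 => /eqP /psumr_eq0P v0; apply/eqP/matrixP => k j.
by rewrite ord1 mxE; apply/eqP; rewrite -sqrf_eq0 v0 // => l _; exact: sqr_ge0.
Qed.

Section EnsembleLoss.
Variables (R : realFieldType) (M : nat) (lam : R).
Hypothesis M_gt0 : (0 < M)%N.
Let m : R := M%:R.

Definition ens_loss (a : 'I_M -> R) (y : R) : R :=
  m^-1 * \sum_(j < M) (a j - y) ^+ 2
  - lam * (m^-1 * \sum_(j < M) (a j - m^-1 * \sum_(l < M) a l) ^+ 2).

Lemma eq_ens_loss (a b : 'I_M -> R) (y : R) : a =1 b -> ens_loss a y = ens_loss b y.
Proof.
move=> ab; rewrite /ens_loss (eq_bigr _ (fun l _ => ab l)).
by congr (_ * _ - _ * (_ * _)); apply: eq_bigr => j _; rewrite ab.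
Qed.

Definition loss_lead : R := (m - lam * (m - 1)) / m ^+ 2.

Definition loss_lin (a : 'I_M -> R) (i : 'I_M) (y : R) : R :=
  2 / m * (lam / m * \sum_(j | j != i) a j - y).

Definition loss_const (a : 'I_M -> R) (i : 'I_M) (y : R) : R :=
  m^-1 * (y ^+ 2 + \sum_(j | j != i) (a j - y) ^+ 2)
  - lam / m * (\sum_(j | j != i) a j ^+ 2 - m^-1 * (\sum_(j | j != i) a j) ^+ 2).

Let m_neq0 : m != 0. Proof. by rewrite pnatr_eq0 -lt0n. Qed.

Lemma sum_sq_dev_mean (b : 'I_M -> R) :
  \sum_(j < M) (b j - m^-1 * \sum_(l < M) b l) ^+ 2
  = \sum_(j < M) b j ^+ 2 - m^-1 * (\sum_(l < M) b l) ^+ 2.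
Proof.
set s := m^-1 * _.
have -> : \sum_(j < M) (b j - s) ^+ 2
          = \sum_(j < M) b j ^+ 2 - (2 * s) * \sum_(j < M) b j + \sum_(j < M) s ^+ 2.
  by rewrite mulr_sumr -sumrB -big_split /=; apply: eq_bigr => j _; ring.
by rewrite sumr_const card_ord -mulr_natr /s -/m; field.
Qed.

Lemma ens_loss_upd (a : 'I_M -> R) (i : 'I_M) (v y : R) :
  ens_loss (upd a i v) y = loss_lead * v ^+ 2 + loss_lin a i y * v + loss_const a i y.
Proof.
have sum_upd (f : R -> R) : \sum_(j | j != i) f (upd a i v j) = \sum_(j | j != i) f (a j).
  by apply: eq_bigr => j /negPf ji; rewrite /upd ji.
rewrite /ens_loss sum_sq_dev_mean (bigD1 i) //= (bigD1 i (P := xpredT)) //=.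
rewrite (bigD1 i (P := xpredT)) //= (sum_upd (fun z => (z - y) ^+ 2)).
rewrite (sum_upd (fun z => z ^+ 2)) (sum_upd id) /upd eqxx /loss_lead /loss_lin /loss_const.
by field.
Qed.

Hypothesis M_gt1 : (1 < M)%N.

Let m1_gt0 : 0 < m - 1.
Proof. by rewrite subr_gt0 /m (ltr_nat R 1 M). Qed.

Lemma loss_lead_gt0 : lam < m / (m - 1) -> 0 < loss_lead.
Proof.
rewrite ltr_pdivlMr // => lam_lt.
by rewrite divr_gt0 ?exprn_gt0 ?ltr0n ?(ltn_trans _ M_gt1) //; lra.
Qed.

Lemma loss_lead_lt0 : m / (m - 1) < lam -> loss_lead < 0.
Proof.
rewrite ltr_pdivrMr // => lam_gt.
by rewrite pmulr_llt0 ?invr_gt0 ?exprn_gt0 ?ltr0n ?(ltn_trans _ M_gt1) //; lra.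
Qed.

End EnsembleLoss.

Section EnsembleEnergy.
Variables (R : realType) (Rho : Type) (M D Q K N : nat) (lam : R).
Variables (phi : 'cV[R]_D -> Rho -> 'cV[R]_K) (Ws : 'I_M -> 'M[R]_(Q, K)).
Variables (rhos : 'I_M -> Rho) (i : 'I_M).
Variables (xs : 'I_N -> 'cV[R]_D) (ys : 'I_N -> 'cV[R]_Q).
Hypothesis M_gt1 : (1 < M)%N.

Lemma energy_coordE (F : 'I_M -> 'cV[R]_D -> 'cV[R]_Q) :
  energy lam F xs ys = (N%:R)^-1 * \sum_(n < N) \sum_(k < Q)
    ens_loss lam (fun j => F j (xs n) k ord0) (ys n k ord0).
Proof.
rewrite /energy; congr (_ * _); apply: eq_bigr => n _.
rewrite /ens_loss /sqnorm sumrB; congr (_ - _).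
  rewrite [in LHS]exchange_big /= mulr_sumr; apply: eq_bigr => k _.
  by congr (_ * _); apply: eq_bigr => j _; rewrite !mxE.
rewrite [in LHS]exchange_big /= !mulr_sumr; apply: eq_bigr => k _.
by congr (_ * (_ * _)); apply: eq_bigr => j _; rewrite /Fbar !(mxE, summxE).
Qed.

Let coords (n : 'I_N) (k : 'I_Q) (j : 'I_M) : R := network phi Ws rhos j (xs n) k ord0.

Lemma energy_updE (W : 'M[R]_(Q, K)) (rho : Rho) :
  energy lam (network phi (upd Ws i W) (upd rhos i rho)) xs ys
  = (N%:R)^-1 * \sum_(n < N) \sum_(k < Q)
      (let v := (W *m phi (xs n) rho) k ord0 in
       loss_lead M lam * v ^+ 2 + loss_lin lam (coords n k) i (ys n k ord0) * v
       + loss_const lam (coords n k) i (ys n k ord0)).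
Proof.
have M_gt0 : (0 < M)%N by apply: ltn_trans M_gt1.
rewrite energy_coordE; congr (_ * _); apply: eq_bigr => n _; apply: eq_bigr => k _.
rewrite /= -ens_loss_upd //; apply: eq_ens_loss => j.
by rewrite /coords /network /upd; case: (j == i).
Qed.

Lemma energy_bounded_below :
  lam < M%:R / (M%:R - 1) -> exists B : R, forall (W : 'M[R]_(Q, K)) (rho : Rho),
    B <= energy lam (network phi (upd Ws i W) (upd rhos i rho)) xs ys.
Proof.
move=> lam_lt; have c_gt0 := loss_lead_gt0 M_gt1 lam_lt.
set c := loss_lead M lam.
exists ((N%:R)^-1 * \sum_(n < N) \sum_(k < Q)
  (loss_const lam (coords n k) i (ys n k ord0)
   - loss_lin lam (coords n k) i (ys n k ord0) ^+ 2 / (4 * c))) => W rho.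
rewrite energy_updE ler_wpM2l ?invr_ge0 ?ler0n //.
by apply: ler_sum => n _; apply: ler_sum => k _; exact: quadratic_ge_vertex.
Qed.

Lemma energy_unbounded_below :
  (0 < N)%N -> (0 < Q)%N -> (forall x, exists rho : Rho, phi x rho != 0) ->
  M%:R / (M%:R - 1) < lam -> forall B : R, exists (W : 'M[R]_(Q, K)) (rho : Rho),
    energy lam (network phi (upd Ws i W) (upd rhos i rho)) xs ys < B.
Proof.
move=> N_gt0 Q_gt0 hphi lam_gt B; have c_lt0 := loss_lead_lt0 M_gt1 lam_gt.
set c := loss_lead M lam; pose n0 := Ordinal N_gt0; pose k0 := Ordinal Q_gt0.
have [rho p_neq0] := hphi (xs n0); set p := phi (xs n0) rho.
pose P : 'M[R]_(Q, K) := \matrix_(q, l) p l ord0.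
pose s n : R := (p^T *m phi (xs n) rho) ord0 ord0.
have PE t n k : (t *: P *m phi (xs n) rho) k ord0 = t * s n.
  rewrite -scalemxAl !mxE; congr (_ * _).
  by rewrite /s mxE; apply: eq_bigr => l _; rewrite !mxE.
have s2_gt0 : 0 < \sum_(nk : 'I_N * 'I_Q) s nk.1 ^+ 2.
  rewrite (bigD1 (n0, k0)) //= ltr_pwDl ?sumr_ge0 // => [|nk _]; last exact: sqr_ge0.
  have -> : s n0 = sqnorm p by rewrite /s mxE; apply: eq_bigr => j _; rewrite mxE expr2.
  by rewrite exprn_gt0 ?sqnorm_gt0.
pose al := (N%:R)^-1 * \sum_(nk : 'I_N * 'I_Q) c * s nk.1 ^+ 2.
pose be := (N%:R)^-1 * \sum_(nk : 'I_N * 'I_Q)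
  loss_lin lam (coords nk.1 nk.2) i (ys nk.1 nk.2 ord0) * s nk.1.
pose ga := (N%:R)^-1 * \sum_(nk : 'I_N * 'I_Q)
  loss_const lam (coords nk.1 nk.2) i (ys nk.1 nk.2 ord0).
have al_lt0 : al < 0 by rewrite /al -mulr_sumr pmulr_rlt0 ?invr_gt0 ?ltr0n // pmulr_llt0.
have [t Et_lt] := quadratic_unbounded_below be ga B al_lt0.
exists (t *: P), rho; apply: le_lt_trans Et_lt; rewrite energy_updE pair_bigA /=.
rewrite (eq_bigr (fun nk => c * s nk.1 ^+ 2 * t ^+ 2
  + loss_lin lam (coords nk.1 nk.2) i (ys nk.1 nk.2 ord0) * s nk.1 * t
  + loss_const lam (coords nk.1 nk.2) i (ys nk.1 nk.2 ord0))) => [|nk _]; last first.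
  by rewrite PE /c; ring.
by rewrite sum_quadratic le_eqVlt; apply/orP; left; apply/eqP; rewrite /al /be /ga; ring.
Qed.

End EnsembleEnergy.

Theorem theorem6 (R : realType) (Rho : Type) (M D Q K N : nat)
  (hM : (2 <= M)%N) (hD : (0 < D)%N) (hQ : (0 < Q)%N) (hK : (0 < K)%N)
  (phi : 'cV[R]_D -> Rho -> 'cV[R]_K)
  (hphi : forall x : 'cV[R]_D, exists rho : Rho, phi x rho != 0)
  (hN : (0 < N)%N) (xs : 'I_N -> 'cV[R]_D) (ys : 'I_N -> 'cV[R]_Q)
  (Ws : 'I_M -> 'M[R]_(Q, K)) (rhos : 'I_M -> Rho) (i : 'I_M) (lam : R) :
  (lam < M%:R / (M%:R - 1) ->
     exists B : R, forall (W : 'M[R]_(Q, K)) (rho : Rho),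
       B <= energy lam (network phi (upd Ws i W) (upd rhos i rho)) xs ys)
  /\
  (lam > M%:R / (M%:R - 1) ->
     forall B : R, exists (W : 'M[R]_(Q, K)) (rho : Rho),
       energy lam (network phi (upd Ws i W) (upd rhos i rho)) xs ys < B).
Proof.
by split; [exact: energy_bounded_below | exact: energy_unbounded_below].
Qed.
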